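(* Let $r$ be a positive integer. For all sufficiently large $n\in F_r$, $P_1(n)^4\nmid n$.
   Context: For a positive integer $r$, $S_r$ is the multiplicative arithmetic function with $S_r(p^{\alpha})=0$ if $p\leq r$ and $S_r(p^{\alpha})=p^{\alpha-1}(p-r)$ if $p>r$, for all primes $p$ and positive integers $\alpha$. $B_r=\{n\in\mathbb{N}: S_r(n)>0\}$ (positive integers whose smallest prime factor exceeds $r$, together with $1$). $F_r$ is the set of $n\in B_r$ such that $S_r(n)<S_r(m)$ for all $m\in B_r$ with $m>n$. $P_1(n)$ denotes the largest prime divisor of $n$. *)

From mathcomp Require Import all_boot.
Set Implicit Arguments. Unset Strict Implicit. Unset Printing Implicit Defensive.

Definition S (r n : nat) : nat :=
  \prod_(p <- primes n) (if p <= r then 0 else p ^ (logn p n).-1 * (p - r)).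

Definition inB (r n : nat) : bool := (0 < n) && (0 < S r n).

Definition inF (r n : nat) : Prop :=
  inB r n /\ forall m, inB r m -> n < m -> S r n < S r m.

Definition P1 (n : nat) : nat := max_pdiv n.

From mathcomp Require Import all_boot zify.
Set Implicit Arguments. Unset Strict Implicit.

(* Let n be in F_r, let l^(e+1) divide n and let q > r be a prime not dividing n.
   Replacing the factor l^e of n by q * t, where t = 1 (mod r!) is chosen just
   large enough, gives some m > n in B_r with S_r(m) <= S_r(n); so minimality
   forces l^e < q^2 (r! + 1).  If P_1(n) is small, one fixed prime q above it
   thus bounds every prime power of n, hence n itself.  If p = P_1(n) is large
   and p^4 divides n, comparing 2^N <= C(2N, N) with Legendre's formula yields a
   prime q in (p, 8 p log_2 p], and then q^2 (r! + 1) <= p^3, a contradiction. *)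

Lemma S_gt0 r n : (0 < S r n) = all (fun p => r < p) (primes n).
Proof.
rewrite /S; elim: (primes n) => [|p s IH]; first by rewrite big_nil.
rewrite big_cons muln_gt0 IH /=; congr (_ && _).
case: (leqP p r) => //= lt_rp.
by rewrite muln_gt0 expn_gt0 subn_gt0 lt_rp (leq_ltn_trans _ lt_rp).
Qed.

Lemma inBE r n : inB r n = (0 < n) && all (fun p => r < p) (primes n).
Proof. by rewrite /inB S_gt0. Qed.

Lemma inB_mul r a b : inB r a -> inB r b -> inB r (a * b).
Proof.
rewrite !inBE => /andP[a0 /allP Ha] /andP[b0 /allP Hb].
rewrite muln_gt0 a0 b0; apply/allP => p.
by rewrite primesM // => /orP[/Ha | /Hb].
Qed.

Lemma inB_dvd r n d : inB r n -> 0 < d -> d %| n -> inB r d.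
Proof.
rewrite !inBE => /andP[n0 /allP Hn] d0 dn; rewrite d0; apply/allP => p.
by rewrite !mem_primes d0 => /andP[pp pd]; apply: Hn; rewrite mem_primes pp n0 (dvdn_trans pd).
Qed.

Lemma inB_prime r q : prime q -> r < q -> inB r q.
Proof. by move=> pq rq; rewrite inBE prime_gt0 // primes_prime //= rq. Qed.

Lemma inB_fact_mul_add1 r s : inB r (r`! * s + 1).
Proof.
rewrite inBE addn1 ltn0Sn; apply/allP => p; rewrite mem_primes => /and3P[pp _].
apply: contraTT; rewrite -leqNgt => le_pr.
rewrite -addn1 dvdn_addr ?dvdn_mulr ?dvdn_fact ?prime_gt0 // dvdn1.
by apply: contraL (prime_gt1 pp) => /eqP ->.
Qed.

Lemma S_mul_prime_dvd r a l : prime l -> l %| a -> 0 < a -> S r (a * l) = S r a * l.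
Proof.
move=> pl la a0; have l0 := prime_gt0 pl.
have la' : l \in primes a by rewrite mem_primes pl a0 la.
have primes_al : primes (a * l) = primes a.
  apply/eq_primes => p; rewrite primesM // (primes_prime pl) inE.
  by case: eqP => [-> | _]; rewrite ?la' ?orbF.
rewrite /S primes_al !(bigD1_seq l) ?primes_uniq //= mulnAC; congr (_ * _).
- rewrite lognM // (logn_prime l pl) eqxx addn1.
  have : 0 < logn l a by rewrite logn_gt0.
  by case: (l <= r) => //; case: (logn l a) => // k _; rewrite expnSr mulnAC.
- apply: eq_bigr => p ne_pl; rewrite lognM // (logn_prime p pl).
  by rewrite (negbTE ne_pl) addn0.
Qed.

Lemma S_mul_prime_coprime r a q : prime q -> ~~ (q %| a) -> 0 < a ->
  S r (a * q) = S r a * (q - r).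
Proof.
move=> pq qa a0; have q0 := prime_gt0 pq; have L0 := fact_gt0 r.
have qa' : q \notin primes a by rewrite mem_primes (negbTE qa) !andbF.
have perm_aq : perm_eq (primes (a * q)) (q :: primes a).
  apply: uniq_perm; rewrite /= ?qa' ?primes_uniq // => p.
  by rewrite primesM // (primes_prime pq) !inE orbC.
rewrite /S (perm_big _ perm_aq) big_cons [RHS]mulnC; congr (_ * _).
- rewrite lognM // (logn_prime q pq) eqxx (logn_coprime (m := a)) ?prime_coprime //.
  by case: leqP => [/eqP/esym | _]; rewrite ?expn0 ?mul1n // subn_eq0.
- apply: eq_big_seq => p pa; rewrite lognM // (logn_prime p pq).
  by case: eqP pa => [-> /(negP qa') | _ _]; rewrite ?addn0.
Qed.

Lemma S_mul_pow_dvd r a l k : prime l -> l %| a -> 0 < a ->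
  S r (a * l ^ k) = S r a * l ^ k.
Proof.
move=> pl la a0; elim: k => [|k IH]; first by rewrite !muln1.
rewrite expnSr mulnA S_mul_prime_dvd ?IH ?mulnA ?dvdn_mulr //.
by rewrite muln_gt0 a0 expn_gt0 prime_gt0.
Qed.

Lemma S_mul_leq r a b : 0 < a -> 0 < b -> S r (a * b) <= S r a * b.
Proof.
move=> a0; elim/ltn_ind: b => b IH b0.
have [b_gt1 | b_le1] := ltnP 1 b; last by rewrite (_ : b = 1) ?muln1; lia.
have pl := pdiv_prime b_gt1; set l := pdiv b in pl.
have eb : b = b %/ l * l by rewrite divnK // pdiv_dvd.
have d0 : 0 < b %/ l by rewrite divn_gt0 ?prime_gt0 ?pdiv_leq // ltnW.
have lt_db : b %/ l < b by rewrite ltn_Pdiv ?prime_gt1.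
rewrite eb mulnA; set c := a * (b %/ l).
have c0 : 0 < c by rewrite muln_gt0 a0.
have S_cl : S r (c * l) <= S r c * l.
  have [lc | lc] := boolP (l %| c); first by rewrite S_mul_prime_dvd.
  by rewrite S_mul_prime_coprime // leq_mul2l leq_subr orbT.
by rewrite (leq_trans S_cl) // mulnA leq_mul2r IH ?orbT.
Qed.

Lemma ltn_mul_cofactor q L D : 0 < q * L -> D < q * (L * (D %/ (q * L)).+1 + 1).
Proof.
move=> qL0; have := divn_eq D (q * L); have := ltn_pmod D qL0.
set s := D %/ (q * L); set m := D %% (q * L); nia.
Qed.

Lemma leq_cofactor r q L D : 0 < r < q -> q ^ 2 * (L + 1) <= D ->
  (q - r) * (L * (D %/ (q * L)).+1 + 1) <= D.
Proof.
case/andP=> r0 rq qD; have sD : D %/ (q * L) * (q * L) <= D by rewrite leq_divM.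
set s := D %/ (q * L) in sD *; set d := q - r.
rewrite -(@leq_pmul2l q); last by lia.
have : q * d * (L + 1) <= r * D.
  apply: leq_trans (leq_pmull _ r0); apply: leq_trans qD.
  by rewrite -mulnn leq_mul2r leq_mul2l /d leq_subr !orbT.
nia.
Qed.

Lemma inF_pfactor_lt r n l e q : 0 < r -> inF r n -> prime l -> l ^ e.+1 %| n ->
  prime q -> ~~ (q %| n) -> r < q -> l ^ e < q ^ 2 * (r`! + 1).
Proof.
move=> r0 [Bn minS] pl le_n pq qn rq; rewrite ltnNge; apply/negP => qD.
have n0 : 0 < n by case/andP: Bn.
have q0 := prime_gt0 pq; have L0 := fact_gt0 r.
set D := l ^ e in qD; set a := n %/ D.
(* The competitor is m = a * q * t; t = 1 (mod r!) has no prime factor <= r. *)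
set t := r`! * (D %/ (q * r`!)).+1 + 1.
have Dn : D %| n by apply: dvdn_trans le_n; rewrite dvdn_exp2l.
have eq_n : n = a * D by rewrite divnK.
have a0 : 0 < a by move: n0; rewrite eq_n muln_gt0 => /andP[].
have la : l %| a by rewrite -(@dvdn_pmul2r D) ?expn_gt0 ?prime_gt0 // -eq_n -expnS.
have qa : ~~ (q %| a) by apply: contra qn => qa; rewrite eq_n dvdn_mulr.
have Bm : inB r (a * q * t).
  apply: inB_mul (inB_fact_mul_add1 _ _); apply: inB_mul (inB_prime pq rq).
  by apply: inB_dvd Bn a0 _; rewrite eq_n dvdn_mulr.
have lt_nm : n < a * q * t.
  by rewrite {1}eq_n -mulnA ltn_pmul2l // ltn_mul_cofactor // muln_gt0 q0.
have := minS _ Bm lt_nm; apply/negP; rewrite -leqNgt eq_n.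
have aq0 : 0 < a * q by rewrite muln_gt0 a0.
have t0 : 0 < t by rewrite /t addn1.
apply: leq_trans (S_mul_leq _ aq0 t0) _.
rewrite S_mul_prime_coprime // S_mul_pow_dvd // -mulnA leq_mul2l.
by rewrite leq_cofactor ?orbT ?r0.
Qed.

Lemma leq_expn_of_pfactor_bound n X Y : 0 < n -> 0 < Y ->
  {in primes n, forall p, p < X} -> {in primes n, forall p, p ^ logn p n <= Y} ->
  n <= Y ^ X.
Proof.
move=> n0 Y0 ltX leY; rewrite {1}(prod_prime_decomp n0) prime_decompE big_map /=.
apply: (@leq_trans (\prod_(p <- primes n) Y)).
  by rewrite big_seq [X in _ <= X]big_seq; apply: leq_prod => p /leY.
rewrite big_const_seq count_predT iter_muln_1 leq_pexp2l //.
rewrite -[X in _ <= X](size_iota 0) uniq_leq_size ?primes_uniq // => p /ltX.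
by rewrite mem_iota.
Qed.

Lemma inF_leq_of_smooth r n q X : 0 < r -> inF r n -> prime q -> r < q ->
  0 < X -> X <= q -> {in primes n, forall l, l < X} ->
  n <= (X * (q ^ 2 * (r`! + 1))) ^ X.
Proof.
move=> r0 Fn pq rq X0 Xq ltX; have n0 : 0 < n by case: Fn => /andP[].
apply: leq_expn_of_pfactor_bound => //; first by rewrite !muln_gt0 X0 prime_gt0 ?addn1.
have qn : ~~ (q %| n).
  by apply/negP => qn; have := ltX q; rewrite mem_primes pq n0 qn ltnNge Xq => /(_ isT).
move=> l ln; have v0 : 0 < logn l n by rewrite logn_gt0.
have pl : prime l by move: ln; rewrite mem_primes => /andP[].
rewrite -(prednK v0) expnSr mulnC leq_mul ?(ltnW (ltX l ln)) //.
by rewrite ltnW // (inF_pfactor_lt r0 Fn pl _ pq qn rq) // prednK // pfactor_dvdnn.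
Qed.

Lemma exp2_leq_bin_double N : 2 ^ N <= 'C(N.*2, N).
Proof.
elim: N => // N IH; rewrite doubleS !binS expnS mul2n -addnn.
by apply: leq_add; apply: leq_trans IH _; rewrite ?leq_addl ?leq_bin2l.
Qed.

Lemma double_divn_leq N d : 0 < d -> N.*2 %/ d <= (N %/ d).*2 + 1.
Proof.
move=> d0; rewrite -ltnS ltn_divLR //.
have := divn_eq N d; have := ltn_pmod N d0.
set a := N %/ d; set b := N %% d; rewrite -!mul2n; nia.
Qed.

Lemma sum_indicator_leq M t : \sum_(1 <= k < M.+1) (k <= t : nat) = minn M t.
Proof.
elim: M => [|M IH]; first by rewrite big_geq // min0n.
by rewrite big_nat_recr //= IH; case: (leqP M.+1 t) => h /=; lia.
Qed.

Lemma logn_bin_double_leq l N : prime l -> 0 < N ->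
  logn l 'C(N.*2, N) <= trunc_log l N.*2.
Proof.
move=> pl N0; have l1 := prime_gt1 pl; have l0 := prime_gt0 pl.
set t := trunc_log l N.*2.
have N2_0 : 0 < N.*2 by rewrite double_gt0.
have C0 : 0 < 'C(N.*2, N) by rewrite bin_gt0 -addnn leq_addr.
have := congr1 (logn l) (bin_fact (leq_addr N N)); rewrite addnK addnn.
rewrite !lognM ?muln_gt0 ?fact_gt0 // !logn_fact //.
set A := \sum_(1 <= k < N.*2.+1) _; set B := \sum_(1 <= k < N.+1) _ => eqA.
have eqB : \sum_(1 <= k < N.*2.+1) N %/ l ^ k = B.
  rewrite (big_cat_nat _ (n := N.+1)) //= ?ltnS ?leq_double ?leq_addl //; last first.
    by rewrite -addnn leq_addr.
  rewrite [X in _ + X]big1_seq ?addn0 // => k /andP[_].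
  rewrite mem_index_iota => /andP[lt_Nk _]; rewrite divn_small //.
  by apply: leq_trans (ltn_expl N l1) _; rewrite leq_pexp2l // ltnW.
suff : A <= 2 * B + t by lia.
rewrite /A -eqB big_distrr /= -[t in _ + t](minn_idPr (_ : t <= N.*2)).
  rewrite -sum_indicator_leq -big_split /=; apply: leq_sum => k _.
  have [le_kt | lt_tk] := leqP k t.
    by rewrite mul2n double_divn_leq // expn_gt0 l0.
  rewrite divn_small // (leq_trans (trunc_log_ltn _ l1)) // leq_pexp2l //.
by apply: ltnW; apply: leq_trans (ltn_expl t l1) _; rewrite trunc_logP.
Qed.

Lemma exists_prime_between x K : 0 < x -> 0 < K -> (2 * x * K) ^ 2 < 2 ^ K ->
  exists q, [/\ prime q, x < q & q <= 2 * x * K].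
Proof.
move=> x0 K0; set N := x * K; have -> : 2 * x * K = N.*2 by rewrite -mulnA mul2n.
move=> small_N2; have N2_0 : 0 < N.*2 by rewrite double_gt0 muln_gt0 x0.
have [/hasP [q] | /hasPn no_prime] :=
  boolP (has (fun q => prime q && (x < q)) (iota 0 N.*2.+1)).
  by rewrite mem_iota ltnS => /andP[_ le_qN] /andP[pq lt_xq]; exists q.
have C0 : 0 < 'C(N.*2, N) by rewrite bin_gt0 -addnn leq_addr.
have pfactor_le p : p \in primes 'C(N.*2, N) -> p ^ logn p 'C(N.*2, N) <= N.*2.
  rewrite mem_primes => /andP[pp _]; apply: leq_trans (trunc_logP (prime_gt1 pp) N2_0).
  by rewrite leq_pexp2l ?prime_gt0 ?logn_bin_double_leq // -double_gt0.
have C_le : 'C(N.*2, N) <= N.*2 ^ x.+1.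
  apply: leq_expn_of_pfactor_bound => // p Cp; rewrite ltnS leqNgt.
  apply: contraTN isT => lt_xp; have pp : prime p by move: Cp; rewrite mem_primes => /andP[].
  have v0 : 0 < logn p 'C(N.*2, N) by rewrite logn_gt0.
  have le_pN : p <= N.*2.
    by apply: leq_trans _ (pfactor_le p Cp); rewrite -{1}(expn1 p) leq_exp2l ?prime_gt1.
  by move: (no_prime p); rewrite mem_iota add0n ltnS le_pN pp lt_xp => /(_ isT).
suff : N.*2 ^ x.+1 < 2 ^ N by rewrite ltnNge (leq_trans (exp2_leq_bin_double N) C_le).
apply: (@leq_ltn_trans ((N.*2 ^ 2) ^ x)).
  by rewrite -expnM leq_pexp2l //; lia.
by rewrite (_ : 2 ^ N = (2 ^ K) ^ x) ?ltn_exp2r // -expnM mulnC.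
Qed.

Lemma cube_leq_exp2 k : 10 <= k -> k ^ 3 <= 2 ^ k.
Proof.
elim: k => // k IH; rewrite leq_eqVlt => /orP[/eqP <- // | lt9k].
apply: leq_trans (_ : 2 * k ^ 3 <= _); last by rewrite (expnS 2) leq_mul2l IH.
rewrite !expnS expn0 !muln1; nia.
Qed.

Lemma mul_sq_lt_exp2 c k : c + 10 <= k -> c * k ^ 2 < 2 ^ k.
Proof.
move=> le_ck; apply: leq_trans (cube_leq_exp2 (leq_trans (leq_addl _ _) le_ck)).
rewrite (expnS k 2) ltn_pmul2r ?expn_gt0; lia.
Qed.

Lemma exists_prime_sq_leq_cube c p : 2 ^ (64 * c + 266) <= p ->
  exists q, [/\ prime q, p < q & q ^ 2 * c <= p ^ 3].
Proof.
move=> large_p; have p0 : 0 < p by apply: leq_trans large_p; rewrite expn_gt0.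
set k := trunc_log 2 p; have lek : 64 * c + 266 <= k by apply: trunc_log_max.
have [lo_p hi_p] := andP (trunc_log_bounds (leqnn 2) p0); rewrite -/k in lo_p hi_p.
have k256 : 256 * k ^ 2 < 2 ^ k by apply: mul_sq_lt_exp2; lia.
have kc : 64 * c * k ^ 2 < 2 ^ k by apply: mul_sq_lt_exp2; lia.
have small_p : (2 * p * (4 * k)) ^ 2 < 2 ^ (4 * k).
  have -> : 2 ^ (4 * k) = (2 ^ k) ^ 4 by rewrite -expnM mulnC.
  move: hi_p k256; rewrite expnS mulnC; set z := 2 ^ k => hi_p k256.
  have pp_lt : p * p < (z * 2) * (z * 2) by apply: ltn_mul.
  have z0 : 0 < z by rewrite expn_gt0.
  have -> : (2 * p * (4 * k)) ^ 2 = 64 * k ^ 2 * (p * p) by lia.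
  apply: (@leq_ltn_trans (64 * k ^ 2 * (z * 2 * (z * 2)))).
    by rewrite leq_mul2l ltnW ?orbT.
  have -> : 64 * k ^ 2 * (z * 2 * (z * 2)) = 256 * k ^ 2 * (z * z) by lia.
  have -> : z ^ 4 = z * z * (z * z) by lia.
  by rewrite ltn_mul2r muln_gt0 z0 (leq_trans k256) ?leq_pmull.
have k0 : 0 < 4 * k by lia.
have [q [pq lt_pq le_q]] := exists_prime_between p0 k0 small_p.
exists q; split => //; apply: leq_trans (_ : (2 * p * (4 * k)) ^ 2 * c <= _).
  by rewrite leq_mul2r leq_exp2r ?le_q ?orbT // (leq_trans _ lt_pq).
have -> : (2 * p * (4 * k)) ^ 2 * c = 64 * c * k ^ 2 * (p * p) by lia.
have -> : p ^ 3 = p * (p * p) by lia.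
by rewrite leq_mul2r ltnW ?(leq_trans kc lo_p) ?orbT.
Qed.

Lemma inF_max_pdiv_pow4 r n : 0 < r -> inF r n ->
  2 ^ (64 * (r`! + 1) + 266) <= max_pdiv n -> ~~ (max_pdiv n ^ 4 %| n).
Proof.
move=> r0 Fn large; set p := max_pdiv n in large *.
have n1 : 1 < n.
  have X1 : 1 < 2 ^ (64 * (r`! + 1) + 266).
    by apply: leq_ltn_trans (ltn_expl _ (isT : 1 < 2)); rewrite addn_gt0 orbT.
  by move: large; rewrite /p; case: (n) => [|[|]] //; rewrite /max_pdiv /= leqNgt X1.
have pp : prime p := max_pdiv_prime n1; have n0 := ltnW n1.
have pn : p \in primes n by rewrite mem_primes pp n0 max_pdiv_dvd.
have rp : r < p by case: Fn => /andP[_]; rewrite S_gt0 => /allP/(_ p pn).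
have [q [pq lt_pq q_le]] := exists_prime_sq_leq_cube large.
have qn : ~~ (q %| n).
  apply: contraTN lt_pq => qn; rewrite -leqNgt max_pdiv_max //.
  by rewrite mem_primes pq n0.
apply/negP => p4n; move: q_le; rewrite leqNgt.
by rewrite (inF_pfactor_lt r0 Fn pp p4n pq qn (ltn_trans rp lt_pq)).
Qed.

Theorem corollary3p2 (r : nat) (hr : 0 < r) :
  exists N : nat, forall n : nat, N <= n -> inF r n -> ~~ (P1 n ^ 4 %| n).
Proof.
set X := 2 ^ (64 * (r`! + 1) + 266).
have [q lt_q pq] := prime_above (X + r).
exists ((X * (q ^ 2 * (r`! + 1))) ^ X).+1 => n large_n Fn.
have [small_pdiv | ] := ltnP (max_pdiv n) X; last exact: inF_max_pdiv_pow4.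
have smooth : {in primes n, forall l, l < X}.
  by move=> l ln; apply: leq_ltn_trans small_pdiv; apply: max_pdiv_max.
have X0 : 0 < X by rewrite expn_gt0.
have rq : r < q by lia.
have Xq : X <= q by lia.
by move: large_n; rewrite ltnNge (inF_leq_of_smooth hr Fn pq rq X0 Xq smooth).
Qed.
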